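(* Let $\lambda^0$ be a constant fourth-order tensor on $\mathbb{R}^3$ with minor and major symmetries ($\lambda^0_{ijkl}=\lambda^0_{jikl}=\lambda^0_{ijlk}=\lambda^0_{klij}$) which is positive definite on symmetric matrices ($\xi:\lambda^0:\xi>0$ for every nonzero real symmetric $3\times3$ matrix $\xi$). For every $q\in\mathbb{R}^3$, the $3\times 3$ matrix $M(q)$ with entries $M_{jk}(q)=\sum_{i,l}\lambda^0_{ijkl}\big(\overline{D_i(q)}D_l(q)+D_i(q)\overline{D_l(q)}\big)$ is real, symmetric and positive semidefinite, and it is positive definite (hence invertible) if and only if $D(q)\neq 0$, i.e. if and only if $q\notin 2\pi\mathbb{Z}^3\cup\big((\pi,\pi,\pi)+2\pi\mathbb{Z}^3\big)$.
   Context: Let $T=\{\tfrac12(1,1,1),\ \tfrac12(1,-1,-1),\ \tfrac12(-1,1,-1),\ \tfrac12(-1,-1,1)\}$. For $q\in\mathbb{R}^3$, $D(q)\in\mathbb{C}^3$ is defined by $D_i(q)=\sum_{e\in T} e_i\, e^{i q\cdot e}$ ($i=1,2,3$). The overline denotes complex conjugation. (The matrix $M(q)$ is the inverse of the discrete displacement Green function $\Omega(q)$ of the tetrahedral scheme.) *)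

From HB Require Import structures.
From mathcomp Require Import all_boot all_order all_algebra.
From mathcomp Require Import complex.
From mathcomp Require Import reals trigo.
Set Implicit Arguments. Unset Strict Implicit. Unset Printing Implicit Defensive.
Import Order.TTheory GRing.Theory Num.Theory.
Local Open Scope ring_scope.
Local Open Scope complex_scope.

Section Defs.
Variable R : realType.

Definition vec3 (a b c : R) : 'rV[R]_3 := \row_(i < 3) nth 0 [:: a; b; c] i.

Definition tetraT : seq 'rV[R]_3 :=
  [:: (2^-1) *: vec3 1 1 1; (2^-1) *: vec3 1 (-1) (-1);
      (2^-1) *: vec3 (-1) 1 (-1); (2^-1) *: vec3 (-1) (-1) 1].

Definition dot3 (u v : 'rV[R]_3) : R := \sum_(i < 3) u 0 i * v 0 i.

Definition expi (t : R) : R[i] := cos t +i* sin t.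

Definition Dvec (q : 'rV[R]_3) : 'rV[R[i]]_3 :=
  \row_(i < 3) \sum_(e <- tetraT) (e 0 i)%:C * expi (dot3 q e).

Definition Mmat (lam : 'I_3 -> 'I_3 -> 'I_3 -> 'I_3 -> R) (q : 'rV[R]_3)
  : 'M[R[i]]_3 :=
  \matrix_(j < 3, k < 3) \sum_(i < 3) \sum_(l < 3)
     (lam i j k l)%:C * (((Dvec q 0 i)^* * Dvec q 0 l) + (Dvec q 0 i * (Dvec q 0 l)^*)).

Definition qform (A : 'M[R[i]]_3) (v : 'cV[R[i]]_3) : R[i] :=
  ((map_mx (@conjc R) v)^T *m A *m v) 0 0.

Definition psd_mx (A : 'M[R[i]]_3) : Prop := forall v, 0 <= qform A v.
Definition pd_mx (A : 'M[R[i]]_3) : Prop := forall v, v != 0 -> 0 < qform A v.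

Definition bad_q (q : 'rV[R]_3) : Prop :=
  (exists z : 'I_3 -> int, forall i, q 0 i = 2 * pi * (z i)%:~R) \/
  (exists z : 'I_3 -> int, forall i, q 0 i = pi + 2 * pi * (z i)%:~R).

End Defs.

From HB Require Import structures.
From mathcomp Require Import all_boot all_order all_algebra.
From mathcomp Require Import complex.
From mathcomp Require Import reals trigo.
From mathcomp Require Import ring lra zify.
Set Implicit Arguments. Unset Strict Implicit. Unset Printing Implicit Defensive.
Import Order.TTheory GRing.Theory Num.Theory.
Local Open Scope ring_scope.
Local Open Scope complex_scope.

Local Notation Re := complex.Re.
Local Notation Im := complex.Im.

(* Write D(q) = a + i b with a, b real.  Then M(q) = 2 sum lam_ijkl (a_i a_l + b_i b_l)
   is a real symmetric matrix, so v^* M v is the sum of the real quadratic forms of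
   Re v and Im v, and each of these equals 2 sum_{c in {a,b}} c(x) : lam : c(x), where
   c(x)_ijkl = c_i x_j x_k c_l.  By the minor symmetries, c(x) : lam : c(x) is a quarter
   of xi : lam : xi for the symmetric matrix xi = c x^T + x c^T, which is nonzero as
   soon as c and x are.  Hence M(q) >= 0, and M(q) > 0 when D(q) <> 0.
   With w_e = e^{i q.e}, D(q) = sum_e e w_e and the only linear relation among the four
   vectors of T is sum_e e = 0, so D(q) = 0 iff the four w_e coincide, i.e. iff
   q_2 + q_3, q_1 + q_3 and q_1 + q_2 all lie in 2 pi Z; these are the two lattices. *)

Section ElasticityTensor.
Variables (R : realFieldType) (n : nat) (lam : 'I_n -> 'I_n -> 'I_n -> 'I_n -> R).

Definition tensor_qform (xi : 'M[R]_n) : R :=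
  \sum_(i < n) \sum_(j < n) \sum_(k < n) \sum_(l < n) xi i j * lam i j k l * xi k l.

Definition sym_tprod (a x : 'I_n -> R) : 'M[R]_n :=
  \matrix_(i, j) (a i * x j + x i * a j).

Definition cross_energy (a x : 'I_n -> R) : R :=
  \sum_(i < n) \sum_(j < n) \sum_(k < n) \sum_(l < n) lam i j k l * (a i * x j * x k * a l).

Lemma sym_tprod_neq0 a x i j : a i != 0 -> x j != 0 -> sym_tprod a x != 0.
Proof.
move=> ai0 xj0; apply/eqP => /matrixP sym0.
have /eqP := sym0 i i; rewrite !mxE mulrC -mulr2n mulrn_eq0 mulf_eq0 (negbTE ai0) /=.
rewrite orbF => /eqP xi0; have /eqP := sym0 i j.
by rewrite !mxE xi0 mul0r addr0 mulf_eq0 (negbTE ai0) (negbTE xj0).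
Qed.

Hypothesis lam_sym1 : forall i j k l, lam i j k l = lam j i k l.
Hypothesis lam_sym2 : forall i j k l, lam i j k l = lam i j l k.

Lemma tensor_qform_sym_tprod a x : tensor_qform (sym_tprod a x) = 4 * cross_energy a x.
Proof.
pose S (F : 'I_n -> 'I_n -> 'I_n -> 'I_n -> R) :=
  \sum_(i < n) \sum_(j < n) \sum_(k < n) \sum_(l < n) F i j k l.
have swap12 F : S F = S (fun i j k l => F j i k l) by rewrite /S exchange_big.
have swap34 F : S F = S (fun i j k l => F i j l k).
  by apply: eq_bigr => i _; apply: eq_bigr => j _; rewrite exchange_big.
have S_ext F G : (forall i j k l, F i j k l = G i j k l) -> S F = S G.
  move=> FG; do 3 (apply: eq_bigr => ? _); exact: eq_bigr.
have S_add F G : S (fun i j k l => F i j k l + G i j k l) = S F + S G.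
  rewrite /S -big_split; apply: eq_bigr => i _; rewrite -big_split.
  by apply: eq_bigr => j _; rewrite -big_split; apply: eq_bigr => k _; rewrite -big_split.
(* each of the four terms of [xi i j * xi k l] reduces to [cross_energy] by a minor symmetry *)
have E1 : S (fun i j k l => lam i j k l * (a i * x j * a k * x l)) = cross_energy a x.
  by rewrite swap34; apply: S_ext => i j k l; rewrite -lam_sym2; ring.
have E2 : S (fun i j k l => lam i j k l * (x i * a j * a k * x l)) = cross_energy a x.
  by rewrite swap12 -E1; apply: S_ext => i j k l; rewrite -lam_sym1; ring.
have E3 : S (fun i j k l => lam i j k l * (x i * a j * x k * a l)) = cross_energy a x.
  by rewrite swap12; apply: S_ext => i j k l; rewrite -lam_sym1; ring.
rewrite /tensor_qform -/(S _) (S_ext _ (fun i j k l =>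
   lam i j k l * (a i * x j * a k * x l) + lam i j k l * (a i * x j * x k * a l) +
   lam i j k l * (x i * a j * a k * x l) + lam i j k l * (x i * a j * x k * a l))).
  have E0 : S (fun i j k l => lam i j k l * (a i * x j * x k * a l)) = cross_energy a x by [].
  by rewrite !S_add E0 E1 E2 E3; ring.
by move=> i j k l; rewrite !mxE; ring.
Qed.

Hypothesis lam_pos : forall xi : 'M[R]_n, xi^T = xi -> xi != 0 -> 0 < tensor_qform xi.

Lemma tensor_qform_ge0 xi : xi^T = xi -> 0 <= tensor_qform xi.
Proof.
move=> xi_sym; have [->|xi0] := eqVneq xi 0; last exact/ltW/lam_pos.
rewrite /tensor_qform big1 // => i _; rewrite big1 // => j _.
rewrite big1 // => k _; rewrite big1 // => l _.
by rewrite !mxE !mul0r.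
Qed.

Lemma sym_tprod_sym a x : (sym_tprod a x)^T = sym_tprod a x.
Proof. by apply/matrixP => i j; rewrite !mxE addrC mulrC [x i * _]mulrC. Qed.

Lemma cross_energy_ge0 a x : 0 <= cross_energy a x.
Proof.
have := tensor_qform_ge0 (sym_tprod_sym a x); rewrite tensor_qform_sym_tprod; lra.
Qed.

Lemma cross_energy_gt0 a x i j : a i != 0 -> x j != 0 -> 0 < cross_energy a x.
Proof.
move=> ai0 xj0; have := lam_pos (sym_tprod_sym a x) (sym_tprod_neq0 ai0 xj0).
rewrite tensor_qform_sym_tprod; lra.
Qed.

End ElasticityTensor.

Section RealSymmetricForms.
Variable R : realType.
Implicit Types (A : 'M[R]_3) (v : 'cV[R[i]]_3).

Definition mx_qform n (A : 'M[R]_n) (x : 'I_n -> R) : R :=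
  \sum_(j < n) \sum_(k < n) x j * A j k * x k.

Lemma Re_sum n (F : 'I_n -> R[i]) : Re (\sum_(i < n) F i) = \sum_(i < n) Re (F i).
Proof. exact: (raddf_sum (@complex.Re R : Rcomplex R -> R)). Qed.

Lemma Im_sum n (F : 'I_n -> R[i]) : Im (\sum_(i < n) F i) = \sum_(i < n) Im (F i).
Proof. exact: (raddf_sum (@complex.Im R : Rcomplex R -> R)). Qed.

Lemma qformE (A : 'M[R[i]]_3) v :
  qform A v = \sum_(j < 3) \sum_(k < 3) (v j 0)^* * A j k * v k 0.
Proof.
rewrite /qform mxE exchange_big; apply: eq_bigr => k _; rewrite mxE mulr_suml.
by apply: eq_bigr => j _; rewrite !mxE.
Qed.

Lemma conjc_mul_real (z w : R[i]) (m : R) :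
  z^* * m%:C * w = (m * (Re z * Re w + Im z * Im w)) +i* (m * (Re z * Im w - Im z * Re w)).
Proof.
case: z w => a b [c d]; simpc.
by apply/eqP; rewrite eq_complex /=; apply/andP; split; apply/eqP; ring.
Qed.

Lemma qform_real_sym A v : A^T = A ->
  qform (map_mx (real_complex R) A) v =
  (mx_qform A (fun j => Re (v j 0)) + mx_qform A (fun j => Im (v j 0)))%:C.
Proof.
move=> A_sym; rewrite qformE; apply/eqP; rewrite eq_complex; apply/andP; split; apply/eqP.
  rewrite Re_sum -big_split; apply: eq_bigr => j _; rewrite Re_sum -big_split.
  by apply: eq_bigr => k _; rewrite mxE conjc_mul_real /=; ring.
(* the imaginary part is antisymmetric in (j, k) *)
rewrite Im_sum /= (eq_bigr (fun j => \sum_(k < 3) A j k * (Re (v j 0) * Im (v k 0)) -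
    \sum_(k < 3) A j k * (Im (v j 0) * Re (v k 0)))); last first.
  move=> j _; rewrite Im_sum -sumrB; apply: eq_bigr => k _.
  by rewrite mxE conjc_mul_real /=; ring.
rewrite sumrB exchange_big /=; apply/eqP; rewrite subr_eq0; apply/eqP.
apply: eq_bigr => j _; apply: eq_bigr => k _.
by rewrite -{1}A_sym mxE [Re _ * _]mulrC.
Qed.

Lemma pd_mx_unitmx (A : 'M[R[i]]_3) : pd_mx A -> A \in unitmx.
Proof.
move=> A_pd; rewrite unitmxE unitfE; apply/negP => /det0P [w w_neq0 wA0].
set v := map_mx (@conjc R) w^T.
have vJ : (map_mx (@conjc R) v)^T = w by apply/matrixP => a b; rewrite !mxE conjcK.
have v_neq0 : v != 0.
  apply: contra w_neq0 => /eqP v0; apply/eqP; rewrite -vJ v0.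
  by apply/matrixP => a b; rewrite !mxE conjc0.
by have := A_pd _ v_neq0; rewrite /qform vJ wA0 mul0mx mxE ltxx.
Qed.

Lemma not_pd_mx0 : ~ pd_mx (0 : 'M[R[i]]_3).
Proof.
have v_neq0 : const_mx 1 != 0 :> 'cV[R[i]]_3.
  by apply/cV0Pn; exists 0; rewrite mxE oner_eq0.
by move/(_ _ v_neq0); rewrite /qform mulmx0 mul0mx mxE ltxx.
Qed.

End RealSymmetricForms.

Lemma complex_neq0E (R : rcfType) (z : R[i]) : (z != 0) = (Re z != 0) || (Im z != 0).
Proof. by case: z => a b; rewrite eq_complex negb_and. Qed.

Section AcousticTensor.
Variables (R : realType) (lam : 'I_3 -> 'I_3 -> 'I_3 -> 'I_3 -> R).

Definition Dvec_re (q : 'rV[R]_3) (i : 'I_3) : R := Re (Dvec q 0 i).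
Definition Dvec_im (q : 'rV[R]_3) (i : 'I_3) : R := Im (Dvec q 0 i).

Definition Mreal (q : 'rV[R]_3) : 'M[R]_3 :=
  \matrix_(j, k) \sum_(i < 3) \sum_(l < 3)
     lam i j k l * (2 * (Dvec_re q i * Dvec_re q l + Dvec_im q i * Dvec_im q l)).

Lemma conjc_mulD (z w : R[i]) :
  z^* * w + z * w^* = (2 * (Re z * Re w + Im z * Im w))%:C.
Proof.
case: z w => a b [c d]; simpc.
by apply/eqP; rewrite eq_complex /=; apply/andP; split; apply/eqP; ring.
Qed.

Lemma MmatE q : Mmat lam q = map_mx (real_complex R) (Mreal q).
Proof.
apply/matrixP => j k; rewrite !mxE raddf_sum; apply: eq_bigr => i _.
by rewrite raddf_sum; apply: eq_bigr => l _; rewrite conjc_mulD -rmorphM.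
Qed.

Lemma Mmat_eq0 q : Dvec q = 0 -> Mmat lam q = 0.
Proof.
move=> D0; apply/matrixP => j k; rewrite MmatE !mxE.
rewrite big1 ?rmorph0 // => i _; rewrite big1 // => l _.
by rewrite /Dvec_re /Dvec_im D0 !mxE /= !mul0r !addr0 !mulr0.
Qed.

Hypothesis lam_sym1 : forall i j k l, lam i j k l = lam j i k l.
Hypothesis lam_sym2 : forall i j k l, lam i j k l = lam i j l k.
Hypothesis lam_sym3 : forall i j k l, lam i j k l = lam k l i j.

Lemma Mreal_sym q : (Mreal q)^T = Mreal q.
Proof.
apply/matrixP => j k; rewrite !mxE exchange_big; apply: eq_bigr => i _.
apply: eq_bigr => l _; rewrite lam_sym3 lam_sym1 lam_sym2; congr (_ * _); ring.
Qed.

Lemma mx_qform_Mreal q x :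
  mx_qform (Mreal q) x = 2 * (cross_energy lam (Dvec_re q) x + cross_energy lam (Dvec_im q) x).
Proof.
rewrite /mx_qform (eq_bigr (fun j => \sum_(i < 3) \sum_(k < 3) \sum_(l < 3)
   x j * (lam i j k l * (2 * (Dvec_re q i * Dvec_re q l + Dvec_im q i * Dvec_im q l))) * x k)).
  rewrite exchange_big /cross_energy -big_split mulr_sumr; apply: eq_bigr => i _.
  rewrite -big_split mulr_sumr; apply: eq_bigr => j _; rewrite -big_split mulr_sumr.
  by apply: eq_bigr => k _; rewrite -big_split mulr_sumr; apply: eq_bigr => l _ /=; ring.
move=> j _; rewrite exchange_big; apply: eq_bigr => k _; rewrite mxE mulr_sumr mulr_suml.
by apply: eq_bigr => i _; rewrite mulr_sumr mulr_suml.
Qed.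

Lemma qform_Mmat q v : qform (Mmat lam q) v =
  (2 * (cross_energy lam (Dvec_re q) (fun j => Re (v j 0))
      + cross_energy lam (Dvec_im q) (fun j => Re (v j 0)))
 + 2 * (cross_energy lam (Dvec_re q) (fun j => Im (v j 0))
      + cross_energy lam (Dvec_im q) (fun j => Im (v j 0))))%:C.
Proof. by rewrite MmatE qform_real_sym ?Mreal_sym // !mx_qform_Mreal. Qed.

Hypothesis lam_pos : forall xi : 'M[R]_3, xi^T = xi -> xi != 0 -> 0 < tensor_qform lam xi.

Lemma Mmat_psd q : psd_mx (Mmat lam q).
Proof.
move=> v; rewrite qform_Mmat ler0c.
have ge0 := cross_energy_ge0 lam_sym1 lam_sym2 lam_pos.
by rewrite addr_ge0 // mulr_ge0 // addr_ge0.
Qed.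

Lemma Mmat_pd q : Dvec q != 0 -> pd_mx (Mmat lam q).
Proof.
move=> /rV0Pn [i Di0] v /cV0Pn [j vj0]; rewrite qform_Mmat ltcR.
have ge0 := cross_energy_ge0 lam_sym1 lam_sym2 lam_pos.
have gt0 a x := @cross_energy_gt0 _ _ _ lam_sym1 lam_sym2 lam_pos a x i j.
have := ge0 (Dvec_re q) (fun j => Re (v j 0)); have := ge0 (Dvec_im q) (fun j => Re (v j 0)).
have := ge0 (Dvec_re q) (fun j => Im (v j 0)); have := ge0 (Dvec_im q) (fun j => Im (v j 0)).
move: Di0 vj0; rewrite !complex_neq0E => /orP[] Di0 /orP[] vj0.
- by have := gt0 (Dvec_re q) (fun j => Re (v j 0)) Di0 vj0; lra.
- by have := gt0 (Dvec_re q) (fun j => Im (v j 0)) Di0 vj0; lra.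
- by have := gt0 (Dvec_im q) (fun j => Re (v j 0)) Di0 vj0; lra.
- by have := gt0 (Dvec_im q) (fun j => Im (v j 0)) Di0 vj0; lra.
Qed.

End AcousticTensor.

Section Phases.
Variable R : realType.
Implicit Types (t x y : R).

Lemma cosD2piz t (z : int) : cos (t + 2 * pi * z%:~R) = cos t.
Proof.
have cosDn (s : R) n : cos (s + 2 * pi * n%:R) = cos s.
  by rewrite -(periodicn (@cosD2pi R) n s) mulr_natl mulr_natr.
case: z => n; first exact: cosDn.
by rewrite NegzE rmorphN /= mulrN -(cosDn (t - _) n.+1) subrK.
Qed.

Lemma cos_eq1P t : cos t = 1 <-> exists z : int, t = 2 * pi * z%:~R.
Proof.
split; last by case=> z ->; rewrite -[_ * _]add0r cosD2piz cos0.
move=> cost1; have pi_gt0 := pi_gt0 R.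
(* reduce t modulo 2 pi into [-pi, pi), where |t| is fixed by cos_inj *)
pose z := Num.floor (t / (2 * pi) + 2^-1); exists z.
have /andP[z_le z_gt] := Num.Theory.floor_itv (t / (2 * pi) + 2^-1).
rewrite -/z rmorphD /= in z_le z_gt.
have tE : t / (2 * pi) * (2 * pi) = t by rewrite divfK // mulf_neq0 // gt_eqF.
set y := t - 2 * pi * z%:~R.
have y_ge : - pi <= y by rewrite /y; nra.
have y_lt : y < pi by rewrite /y; nra.
have : `|y| = 0.
  apply: (@cos_inj R);
    rewrite ?in_itv /= ?normr_ge0 ?ler_norml ?y_ge ?(ltW y_lt) ?lexx ?(ltW pi_gt0) //.
  by rewrite cos_norm cos0 -(cosD2piz _ z) subrK.
by move/normr0_eq0/eqP; rewrite subr_eq0 => /eqP.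
Qed.

Lemma expiD x y : expi (x + y) = expi x * expi y.
Proof.
rewrite /expi cosD sinD; simpc.
by apply/eqP; rewrite eq_complex /=; apply/andP; split; apply/eqP; ring.
Qed.

Lemma expi_neq0 t : expi t != 0.
Proof.
apply: contraPneq (cos2Dsin2 t) => /eqP; rewrite eq_complex /= => /andP[/eqP-> /eqP->].
by rewrite expr0n addr0 => /eqP; rewrite eq_sym oner_eq0.
Qed.

Lemma expi_eq1P t : expi t = 1 <-> exists z : int, t = 2 * pi * z%:~R.
Proof.
rewrite -cos_eq1P; split=> [/(congr1 (@complex.Re R)) //|cost1].
have /eqP : sin t ^+ 2 = 0 by rewrite sin2cos2 cost1 expr1n subrr.
by rewrite sqrf_eq0 /expi cost1 => /eqP->.
Qed.

Lemma expi_eqP x y : expi x = expi y <-> expi (x - y) = 1.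
Proof.
have -> : expi x = expi (x - y) * expi y by rewrite -expiD subrK.
split=> [|->]; last by rewrite mul1r.
by rewrite -{2}[expi y]mul1r; apply: mulIf; exact: expi_neq0.
Qed.

End Phases.

Lemma sum_ord3 (V : nmodType) (F : 'I_3 -> V) : \sum_(i < 3) F i = F 0 + F 1 + F 2.
Proof.
rewrite !big_ord_recr big_ord0 /= add0r.
by congr (F _ + F _ + F _); apply: val_inj.
Qed.

Lemma ord3P (i : 'I_3) : i = 0 \/ i = 1 \/ i = 2.
Proof.
by case: i => [[|[|[|//]]]] ?; [left|right; left|right; right]; apply: val_inj.
Qed.

Lemma row3_eq0P (V : nmodType) (v : 'rV[V]_3) :
  v = 0 <-> [/\ v 0 0 = 0, v 0 1 = 0 & v 0 2 = 0].
Proof.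
split=> [->|[v0 v1 v2]]; first by rewrite !mxE.
by apply/rowP => i; rewrite mxE; case: (ord3P i) => [->|[->|->]].
Qed.

Section TetrahedralSum.
Variables (R : realType) (q : 'rV[R]_3).

Let p (a b c : R) : R := 2^-1 * (a * q 0 0 + b * q 0 1 + c * q 0 2).
Let w (a b c : R) : R[i] := expi (p a b c).
Let h : R[i] := (2^-1)%:C.

Lemma dot3_tetra a b c : dot3 q (2^-1 *: vec3 a b c) = p a b c.
Proof. by rewrite /dot3 sum_ord3 !mxE /= /p; ring. Qed.

Lemma Dvec_tetra :
  [/\ Dvec q 0 0 = h * (w 1 1 1 + w 1 (-1) (-1) - w (-1) 1 (-1) - w (-1) (-1) 1),
      Dvec q 0 1 = h * (w 1 1 1 - w 1 (-1) (-1) + w (-1) 1 (-1) - w (-1) (-1) 1) &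
      Dvec q 0 2 = h * (w 1 1 1 - w 1 (-1) (-1) - w (-1) 1 (-1) + w (-1) (-1) 1)].
Proof.
split; rewrite mxE /tetraT !big_cons big_nil !mxE !dot3_tetra /=;
  by rewrite !rmorphM !rmorphN rmorph1 /= /h /w; ring.
Qed.

Lemma Dvec_eq0P : Dvec q = 0 <->
  [/\ expi (q 0 1 + q 0 2) = 1, expi (q 0 0 + q 0 2) = 1 & expi (q 0 0 + q 0 1) = 1].
Proof.
rewrite (_ : q 0 1 + q 0 2 = p 1 1 1 - p 1 (-1) (-1)); last by rewrite /p; field.
rewrite (_ : q 0 0 + q 0 2 = p 1 1 1 - p (-1) 1 (-1)); last by rewrite /p; field.
rewrite (_ : q 0 0 + q 0 1 = p 1 1 1 - p (-1) (-1) 1); last by rewrite /p; field.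
rewrite row3_eq0P; have [-> -> ->] := Dvec_tetra.
split=> [[D0 D1 D2]|[/expi_eqP E2 /expi_eqP E3 /expi_eqP E4]]; last first.
  by rewrite /w -E2 -E3 -E4; split; ring.
have hh : h + h = 1 by rewrite /h -rmorphD /= -div1r -splitr.
(* the differences w 1 1 1 - w _ _ _ are sums of two components of D *)
have eq_of_sum x y u v :
    h * u = 0 -> h * v = 0 -> h * u + h * v = (h + h) * (x - y) -> x = y.
  by move=> -> ->; rewrite hh mul1r addr0 => /esym/eqP; rewrite subr_eq0 => /eqP.
split; apply/expi_eqP.
- by apply: eq_of_sum D1 D2 _; rewrite /w; ring.
- by apply: eq_of_sum D0 D2 _; rewrite /w; ring.
- by apply: eq_of_sum D0 D1 _; rewrite /w; ring.
Qed.

End TetrahedralSum.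

Lemma pair_sums_latticeP (R : realFieldType) (c : R) (q : 'rV[R]_3) :
  [/\ exists a : int, q 0 1 + q 0 2 = 2 * c * a%:~R,
      exists b : int, q 0 0 + q 0 2 = 2 * c * b%:~R &
      exists d : int, q 0 0 + q 0 1 = 2 * c * d%:~R] <->
  (exists z : 'I_3 -> int, forall i, q 0 i = 2 * c * (z i)%:~R) \/
  (exists z : 'I_3 -> int, forall i, q 0 i = c + 2 * c * (z i)%:~R).
Proof.
split=> [[[a ha] [b hb] [d hd]]|[[z hz]|[z hz]]]; last first.
- by split; [exists (1 + z 1 + z 2)|exists (1 + z 0 + z 2)|exists (1 + z 0 + z 1)];
    rewrite !hz !rmorphD /=; lra.
- by split; [exists (z 1 + z 2)|exists (z 0 + z 2)|exists (z 0 + z 1)];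
    rewrite !hz !rmorphD /=; lra.
(* q 0 0 = c * s, and the parity of s decides between the two lattices *)
pose s := b + d - a.
have q0E : q 0 0 = c * s%:~R by rewrite /s !rmorphD !rmorphN /=; lra.
have q1E : q 0 1 = q 0 0 + 2 * c * (a - b)%:~R by rewrite !rmorphD !rmorphN /=; lra.
have q2E : q 0 2 = q 0 0 + 2 * c * (a - d)%:~R by rewrite !rmorphD !rmorphN /=; lra.
pose t := (s %/ 2)%Z.
have sE : (s%:~R : R) = t%:~R * 2 + (s %% 2)%Z%:~R.
  by rewrite {1}(divz_eq s 2) rmorphD rmorphM.
have [r0|r1] : (s %% 2)%Z = 0 \/ (s %% 2)%Z = 1.
  have : (0 <= s %% 2)%Z by rewrite modz_ge0.
  have : (s %% 2 < 2)%Z by rewrite ltz_pmod.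
  lia.
- left; exists (fun i => nth 0 [:: t; t + a - b; t + a - d] i) => i.
  have {}q0E : q 0 0 = 2 * c * t%:~R by rewrite q0E sE r0 /=; lra.
  case: (ord3P i) => [->|[->|->]] /=; rewrite ?q1E ?q2E q0E ?rmorphD ?rmorphN /=; lra.
- right; exists (fun i => nth 0 [:: t; t + a - b; t + a - d] i) => i.
  have {}q0E : q 0 0 = c + 2 * c * t%:~R by rewrite q0E sE r1 /=; lra.
  case: (ord3P i) => [->|[->|->]] /=; rewrite ?q1E ?q2E q0E ?rmorphD ?rmorphN /=; lra.
Qed.

Lemma Dvec_eq0_bad_q (R : realType) (q : 'rV[R]_3) : Dvec q = 0 <-> bad_q q.
Proof.
rewrite Dvec_eq0P /bad_q -pair_sums_latticeP.
by split=> [] [/expi_eq1P ? /expi_eq1P ? /expi_eq1P ?].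
Qed.

Theorem mainTheorem2 (R : realType)
  (lam : 'I_3 -> 'I_3 -> 'I_3 -> 'I_3 -> R)
  (lam_sym1 : forall i j k l, lam i j k l = lam j i k l)
  (lam_sym2 : forall i j k l, lam i j k l = lam i j l k)
  (lam_sym3 : forall i j k l, lam i j k l = lam k l i j)
  (lam_pos : forall xi : 'M[R]_3, xi^T = xi -> xi != 0 ->
     0 < \sum_(i < 3) \sum_(j < 3) \sum_(k < 3) \sum_(l < 3)
           xi i j * lam i j k l * xi k l)
  (q : 'rV[R]_3) :
  (forall j k, Mmat lam q j k \is Num.real) /\
  (Mmat lam q)^T = Mmat lam q /\
  psd_mx (Mmat lam q) /\
  (pd_mx (Mmat lam q) <-> Dvec q != 0) /\
  (pd_mx (Mmat lam q) -> Mmat lam q \in unitmx) /\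
  (Dvec q != 0 <-> ~ bad_q q).
Proof.
have M_pdP : pd_mx (Mmat lam q) <-> Dvec q != 0.
  split=> [M_pd|]; last exact: Mmat_pd.
  by apply/eqP => /(Mmat_eq0 lam) M0; move: M_pd; rewrite M0; apply: not_pd_mx0.
split; first by move=> j k; rewrite MmatE mxE; apply/complex_realP; eexists.
split; first by rewrite MmatE map_trmx Mreal_sym.
split; first exact: Mmat_psd.
split; first exact: M_pdP.
split; first exact: pd_mx_unitmx.
split=> [/eqP D_neq0 /Dvec_eq0_bad_q //|no_bad].
by apply/eqP => /Dvec_eq0_bad_q.
Qed.
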